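(* There exist a finitary weakly cartesian monad $T$ on $\mathsf{Set}$ and a $T$-algebra $(A,e)$ such that the bar construction $X=\mathrm{Bar}(T,A)$ contains an inner horn of shape $\Lambda^3_1$ with no filler and an inner horn of shape $\Lambda^3_2$ with no filler.
   Context: A monad $(T,\eta,\mu)$ on $\mathsf{Set}$ is weakly cartesian if $T$ preserves weak pullbacks and every naturality square of $\eta$ and of $\mu$ is a weak pullback (a commutative square of sets with $f:A\to B$, $g:A\to C$, $m:B\to D$, $n:C\to D$ is a weak pullback if for all $b,c$ with $m(b)=n(c)$ there is $a$ with $f(a)=b$, $g(a)=c$). The bar construction of a $T$-algebra $(A,e)$ is the simplicial set $X$ with $X_n=T^{n+1}A$, face maps $d_{n,0}=T^ne$ and $d_{n,i}=T^{n-i}\mu_{T^{i-1}A}$ for $1\le i\le n$, and degeneracies $s_{n,i}=T^{n-i+1}\eta_{T^iA}$ for $0\le i\le n$. For $0<k<3$, an inner horn of shape $\Lambda^3_k$ in $X$ is a family $(x_i)_{i\in\{0,1,2,3\}\setminus\{k\}}$ of elements of $X_2$ with $d_ix_j=d_{j-1}x_i$ for all $i<j$ with $i,j\neq k$; a filler is an element $y\in X_3$ with $d_iy=x_i$ for all $i\neq k$. *)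

(* monads on Set are modelled as endofunctors on Rocq's Type. *)
From Stdlib Require Import List.

Record Monad := {
  T : Type -> Type;
  fmap : forall X Y : Type, (X -> Y) -> T X -> T Y;
  eta : forall X : Type, X -> T X;
  mu : forall X : Type, T (T X) -> T X;
  fmap_id : forall X (x : T X), fmap X X (fun a => a) x = x;
  fmap_comp : forall X Y Z (f : X -> Y) (g : Y -> Z) (x : T X),
      fmap X Z (fun a => g (f a)) x = fmap Y Z g (fmap X Y f x);
  eta_nat : forall X Y (f : X -> Y) (a : X), fmap X Y f (eta X a) = eta Y (f a);
  mu_nat : forall X Y (f : X -> Y) (x : T (T X)),
      fmap X Y f (mu X x) = mu Y (fmap (T X) (T Y) (fmap X Y f) x);
  mu_eta_l : forall X (x : T X), mu X (eta (T X) x) = x;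
  mu_eta_r : forall X (x : T X), mu X (fmap X (T X) (eta X) x) = x;
  mu_assoc : forall X (x : T (T (T X))),
      mu X (mu (T X) x) = mu X (fmap (T (T X)) (T X) (mu X) x)
}.

Arguments fmap {_ _ _} _ _.
Arguments eta {_ _} _.
Arguments mu {_ _} _.

Definition is_weak_pullback {A B C D : Type}
  (f : A -> B) (g : A -> C) (m : B -> D) (n : C -> D) : Prop :=
  (forall a, m (f a) = n (g a)) /\
  (forall b c, m b = n c -> exists a, f a = b /\ g a = c).

Definition preserves_weak_pullbacks (M : Monad) : Prop :=
  forall (A B C D : Type) (f : A -> B) (g : A -> C) (m : B -> D) (n : C -> D),
    is_weak_pullback f g m n ->
    is_weak_pullback (fmap (m:=M) f) (fmap (m:=M) g) (fmap (m:=M) m) (fmap (m:=M) n).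

Definition weakly_cartesian (M : Monad) : Prop :=
  preserves_weak_pullbacks M /\
  (forall (X Y : Type) (h : X -> Y),
      is_weak_pullback h (@eta M X) (@eta M Y) (fmap (m:=M) h)) /\
  (forall (X Y : Type) (h : X -> Y),
      is_weak_pullback (fmap (m:=M) (fmap (m:=M) h)) (@mu M X) (@mu M Y) (fmap (m:=M) h)).

(** Finitary (for Set-functors, equivalently: every element of T X lies in the
    image of T S -> T X for some finite subset S of X). *)
Definition finitary (M : Monad) : Prop :=
  forall (X : Type) (x : T M X),
    exists (l : list X) (y : T M {z : X | In z l}),
      fmap (m:=M) (@proj1_sig X (fun z => In z l)) y = x.

Definition is_algebra (M : Monad) (A : Type) (e : T M A -> A) : Prop :=
  (forall a, e (eta a) = a) /\
  (forall x : T M (T M A), e (mu x) = e (fmap (m:=M) e x)).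

Section Bar.
Variables (M : Monad) (A : Type) (e : T M A -> A).
Let TT := T M.

Definition X1 := TT (TT A).
Definition X2 := TT (TT (TT A)).
Definition X3 := TT (TT (TT (TT A))).

Definition d2 (i : nat) : X2 -> X1 :=
  match i with
  | 0 => fmap (m:=M) (fmap (m:=M) e)
  | 1 => fmap (m:=M) (@mu M A)
  | _ => @mu M (TT A)
  end.

Definition d3 (i : nat) : X3 -> X2 :=
  match i with
  | 0 => fmap (m:=M) (fmap (m:=M) (fmap (m:=M) e))
  | 1 => fmap (m:=M) (fmap (m:=M) (@mu M A))
  | 2 => fmap (m:=M) (@mu M (TT A))
  | _ => @mu M (TT (TT A))
  end.

(** An inner horn of shape Lambda^3_k: the family (x i)_{i in {0,1,2,3}, i <> k}
    (the value x k is ignored). *)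
Definition is_horn3 (k : nat) (x : nat -> X2) : Prop :=
  forall i j, i < j -> j <= 3 -> i <> k -> j <> k ->
    d2 i (x j) = d2 (j - 1) (x i).

Definition has_filler3 (k : nat) (x : nat -> X2) : Prop :=
  exists y : X3, forall i, i <= 3 -> i <> k -> d3 i y = x i.

End Bar.

From Stdlib Require Import List Permutation Lia.
From Stdlib Require Import ProofIrrelevance FunctionalExtensionality PropExtensionality ClassicalEpsilon.
Import ListNotations.

(** The monad of finite multisets (bags) is finitary and weakly cartesian.
    Over its terminal algebra 1 we have T 1 = ℕ (the bag [num k] has k points),
    so a 2-simplex of the bar construction is a bag of bags of numbers.
    In each horn below, an element of face 0 forces a piece {{c1, c2}}
    (resp. {{c1}, {c2}}) of any filler y, and two other faces of y then
    constrain c1, c2 incompatibly: for Λ³₁ face 2 forces c1 = c2 while face 3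
    forces {c1, c2} = {1, 2}; for Λ³₂ face 3 forces c1, c2 ∈ {1, 2} while
    face 1 forces {c1, c2} to be {1, 3} or {2, 4}. *)

(** A bag is a permutation class of lists, encoded as a predicate on lists;
    [list_of] picks a representative by choice. *)
Definition bag (X : Type) : Type :=
  { P : list X -> Prop | exists l, P = Permutation l }.

Definition bag_of {X} (l : list X) : bag X :=
  exist _ (Permutation l) (ex_intro _ l eq_refl).

Definition list_of {X} (b : bag X) : list X :=
  proj1_sig (constructive_indefinite_description _ (proj2_sig b)).

Section Bags.
Context {X : Type}.

Lemma bag_of_eq (l1 l2 : list X) : bag_of l1 = bag_of l2 <-> Permutation l1 l2.
Proof.
  split.
  - intro E. apply (f_equal (fun b => proj1_sig b l2)) in E.
    unfold bag_of in E. cbn in E. rewrite E. reflexivity.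
  - intro H. apply subset_eq_compat. extensionality l.
    apply propositional_extensionality. rewrite H. reflexivity.
Qed.

Lemma bag_of_list_of (b : bag X) : bag_of (list_of b) = b.
Proof.
  destruct b as [P HP]. unfold list_of. cbn.
  destruct (constructive_indefinite_description _ HP) as [l ->]. cbn.
  apply subset_eq_compat. reflexivity.
Qed.

Lemma list_of_bag_of (l : list X) : Permutation (list_of (bag_of l)) l.
Proof. apply bag_of_eq, bag_of_list_of. Qed.

Lemma bag_of_length (l1 l2 : list X) : bag_of l1 = bag_of l2 -> length l1 = length l2.
Proof. intro E. apply Permutation_length, bag_of_eq, E. Qed.

Lemma bag_of_single_inj (a b : X) : bag_of [a] = bag_of [b] -> a = b.
Proof. intro E. apply bag_of_eq, Permutation_length_1 in E. exact E. Qed.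

Lemma bag_of_pair_diag (a b c : X) : bag_of [a; b] = bag_of [c; c] -> a = c /\ b = c.
Proof.
  intro E. apply bag_of_eq, Permutation_length_2_inv in E.
  destruct E as [E | E]; injection E; auto.
Qed.

Lemma bag_of_surj (b : bag X) : exists l, b = bag_of l.
Proof. exists (list_of b). symmetry. apply bag_of_list_of. Qed.

End Bags.

Lemma map_section {A B} (f : A -> B) (g : B -> A) :
  (forall b, f (g b) = b) -> forall L, map f (map g L) = L.
Proof. intros fg L. rewrite map_map, <- map_id. apply map_ext, fg. Qed.

Lemma bags_of_surj {X} (L : list (bag X)) : exists ls, L = map bag_of ls.
Proof. exists (map list_of L). symmetry. apply map_section, bag_of_list_of. Qed.

Lemma bagss_of_surj {X} (Ls : list (list (bag X))) : exists lss, Ls = map (map bag_of) lss.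
Proof.
  exists (map (map list_of) Ls). symmetry.
  apply map_section. apply map_section, bag_of_list_of.
Qed.

Definition bag_map {X Y} (f : X -> Y) (b : bag X) : bag Y := bag_of (map f (list_of b)).
Definition bag_eta {X} (x : X) : bag X := bag_of [x].
Definition bag_mu {X} (B : bag (bag X)) : bag X := bag_of (flat_map list_of (list_of B)).
Definition bag_union {X} (a b : bag X) : bag X := bag_of (list_of a ++ list_of b).

Lemma bag_map_of {X Y} (f : X -> Y) (l : list X) : bag_map f (bag_of l) = bag_of (map f l).
Proof. apply bag_of_eq, Permutation_map, list_of_bag_of. Qed.

Lemma bag_mu_of {X} (L : list (bag X)) : bag_mu (bag_of L) = bag_of (flat_map list_of L).
Proof. apply bag_of_eq, Permutation_flat_map, list_of_bag_of. Qed.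

Lemma bag_mu_of_map {X} (ls : list (list X)) : bag_mu (bag_of (map bag_of ls)) = bag_of (concat ls).
Proof.
  rewrite bag_mu_of. apply bag_of_eq.
  induction ls as [|l ls IH]; cbn; [reflexivity|].
  apply Permutation_app; [apply list_of_bag_of | exact IH].
Qed.

Lemma bag_union_of {X} (l1 l2 : list X) : bag_union (bag_of l1) (bag_of l2) = bag_of (l1 ++ l2).
Proof. apply bag_of_eq, Permutation_app; apply list_of_bag_of. Qed.

Lemma bag_mu_nil {X} : bag_mu (bag_of []) = bag_of (@nil X).
Proof. rewrite bag_mu_of. reflexivity. Qed.

Lemma bag_mu_cons {X} (b : bag X) (L : list (bag X)) :
  bag_mu (bag_of (b :: L)) = bag_union b (bag_mu (bag_of L)).
Proof.
  rewrite !bag_mu_of. apply bag_of_eq. cbn.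
  apply Permutation_app_head. symmetry. apply list_of_bag_of.
Qed.

Lemma bag_map_bag_of_map {X Y} (f : X -> Y) (ls : list (list X)) :
  bag_map (bag_map f) (bag_of (map bag_of ls)) = bag_of (map bag_of (map (map f) ls)).
Proof.
  rewrite bag_map_of, !map_map. f_equal. apply map_ext. intro. apply bag_map_of.
Qed.

Section BagMonadLaws.
Context {X Y Z : Type}.

Lemma bag_map_id (b : bag X) : bag_map (fun a => a) b = b.
Proof. destruct (bag_of_surj b) as [l ->]. rewrite bag_map_of, map_id. reflexivity. Qed.

Lemma bag_map_comp (f : X -> Y) (g : Y -> Z) (b : bag X) :
  bag_map (fun a => g (f a)) b = bag_map g (bag_map f b).
Proof. destruct (bag_of_surj b) as [l ->]. rewrite !bag_map_of, map_map. reflexivity. Qed.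

Lemma bag_map_eta (f : X -> Y) (a : X) : bag_map f (bag_eta a) = bag_eta (f a).
Proof. unfold bag_eta. rewrite bag_map_of. reflexivity. Qed.

Lemma bag_map_mu (f : X -> Y) (B : bag (bag X)) :
  bag_map f (bag_mu B) = bag_mu (bag_map (bag_map f) B).
Proof.
  destruct (bag_of_surj B) as [L ->]. destruct (bags_of_surj L) as [ls ->].
  rewrite bag_map_bag_of_map, !bag_mu_of_map, bag_map_of, concat_map.
  reflexivity.
Qed.

Lemma bag_mu_eta (b : bag X) : bag_mu (bag_eta b) = b.
Proof.
  destruct (bag_of_surj b) as [l ->].
  unfold bag_eta. rewrite bag_mu_cons, bag_mu_nil, bag_union_of, app_nil_r.
  reflexivity.
Qed.

Lemma bag_mu_map_eta (b : bag X) : bag_mu (bag_map bag_eta b) = b.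
Proof.
  destruct (bag_of_surj b) as [l ->].
  rewrite bag_map_of. unfold bag_eta.
  rewrite <- (map_map (fun a => [a]) bag_of), bag_mu_of_map.
  f_equal. induction l; cbn; f_equal; assumption.
Qed.

Lemma bag_mu_assoc (B : bag (bag (bag X))) :
  bag_mu (bag_mu B) = bag_mu (bag_map bag_mu B).
Proof.
  destruct (bag_of_surj B) as [L ->]. destruct (bags_of_surj L) as [Ls ->].
  destruct (bagss_of_surj Ls) as [lss ->].
  rewrite bag_mu_of_map, <- concat_map, bag_mu_of_map, bag_map_of, !map_map.
  rewrite (map_ext _ (fun ls => bag_of (concat ls)) bag_mu_of_map).
  rewrite <- (map_map (@concat X) bag_of), bag_mu_of_map.
  f_equal. induction lss as [|ls lss IH]; cbn; [reflexivity|].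
  rewrite concat_app, IH. reflexivity.
Qed.

End BagMonadLaws.

Definition bag_monad : Monad := {|
  T := bag;
  fmap := @bag_map;
  eta := @bag_eta;
  mu := @bag_mu;
  fmap_id := @bag_map_id;
  fmap_comp := @bag_map_comp;
  eta_nat := @bag_map_eta;
  mu_nat := @bag_map_mu;
  mu_eta_l := @bag_mu_eta;
  mu_eta_r := @bag_mu_map_eta;
  mu_assoc := @bag_mu_assoc
|}.

Lemma fmap_bag_monad {X Y} (f : X -> Y) : fmap (m:=bag_monad) f = bag_map f.
Proof. reflexivity. Qed.

Lemma bag_map_eq_of_inv {X Y} (f : X -> Y) (b : bag X) (l : list Y) :
  bag_map f b = bag_of l -> exists l', b = bag_of l' /\ map f l' = l.
Proof.
  destruct (bag_of_surj b) as [lb ->]. rewrite bag_map_of.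
  intro E. apply bag_of_eq, Permutation_sym, Permutation_map_inv in E as [l' [-> P]].
  exists l'. split; [apply bag_of_eq, P | reflexivity].
Qed.

Lemma bag_map_eq_single_inv {X Y} (f : X -> Y) (b : bag X) (y : Y) :
  bag_map f b = bag_of [y] -> exists x, b = bag_of [x] /\ f x = y.
Proof.
  intro E. apply bag_map_eq_of_inv in E as [[|x [|]] [-> E]]; try discriminate.
  injection E as <-. exists x. split; reflexivity.
Qed.

Lemma bag_map_eq_pair_inv {X Y} (f : X -> Y) (b : bag X) (y1 y2 : Y) :
  bag_map f b = bag_of [y1; y2] ->
  exists x1 x2, b = bag_of [x1; x2] /\ f x1 = y1 /\ f x2 = y2.
Proof.
  intro E. apply bag_map_eq_of_inv in E as [[|x1 [|x2 [|]]] [-> E]]; try discriminate.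
  injection E as <- <-. exists x1, x2. repeat split.
Qed.

Lemma Permutation_map_weak_pullback {A B C D}
    (f : A -> B) (g : A -> C) (m : B -> D) (n : C -> D) :
  is_weak_pullback f g m n ->
  forall lb lc, Permutation (map m lb) (map n lc) ->
  exists la, map f la = lb /\ Permutation (map g la) lc.
Proof.
  intros [_ Hwp] lb. induction lb as [|b lb IH]; intros lc Hp; cbn in Hp.
  - apply Permutation_nil in Hp. destruct lc; [|discriminate].
    exists []. split; constructor.
  - assert (Hin : In (m b) (map n lc)) by (rewrite <- Hp; left; reflexivity).
    apply in_map_iff in Hin as [c [Hc Hin]].
    apply in_split in Hin as [lc1 [lc2 ->]].
    rewrite map_app in Hp. cbn in Hp. rewrite Hc in Hp.
    apply Permutation_cons_app_inv in Hp. rewrite <- map_app in Hp.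
    destruct (IH _ Hp) as [la [<- P]].
    destruct (Hwp b c (eq_sym Hc)) as [a [<- Ha]].
    exists (a :: la). split; [reflexivity|].
    cbn. rewrite Ha, P. apply Permutation_middle.
Qed.

Lemma concat_eq_map_inv {X Y} (h : X -> Y) (ls : list (list Y)) (l : list X) :
  concat ls = map h l -> exists lss, ls = map (map h) lss /\ concat lss = l.
Proof.
  revert l. induction ls as [|l0 ls IH]; intros l E; cbn in E.
  - exists []. destruct l; [split; reflexivity | discriminate].
  - symmetry in E. apply map_eq_app in E as [l1 [l2 [-> [<- E2]]]].
    destruct (IH l2 (eq_sym E2)) as [lss [-> <-]].
    exists (l1 :: lss). split; reflexivity.
Qed.

Lemma bag_preserves_weak_pullbacks : preserves_weak_pullbacks bag_monad.
Proof.
  intros A B C D f g m n Hwp. rewrite !fmap_bag_monad. split.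
  - intro a. destruct (bag_of_surj a) as [l ->].
    rewrite !bag_map_of, !map_map. f_equal. apply map_ext, Hwp.
  - intros b c. destruct (bag_of_surj b) as [lb ->], (bag_of_surj c) as [lc ->].
    rewrite !bag_map_of. intro E. apply bag_of_eq in E.
    destruct (Permutation_map_weak_pullback f g m n Hwp lb lc E) as [la [Ef Eg]].
    exists (bag_of la). rewrite !bag_map_of, Ef. split; [reflexivity|].
    apply bag_of_eq, Eg.
Qed.

Lemma bag_eta_weak_pullback {X Y} (h : X -> Y) :
  is_weak_pullback h (@eta bag_monad X) (@eta bag_monad Y) (fmap (m:=bag_monad) h).
Proof.
  split.
  - intro a. symmetry. apply bag_map_eta.
  - intros y b E. symmetry in E.
    apply bag_map_eq_single_inv in E as [x [-> <-]].
    exists x. split; reflexivity.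
Qed.

Lemma bag_mu_weak_pullback {X Y} (h : X -> Y) :
  is_weak_pullback (fmap (m:=bag_monad) (fmap (m:=bag_monad) h))
    (@mu bag_monad X) (@mu bag_monad Y) (fmap (m:=bag_monad) h).
Proof.
  split.
  - intro a. symmetry. apply bag_map_mu.
  - intros B b. cbn.
    destruct (bag_of_surj B) as [L ->]. destruct (bags_of_surj L) as [ls ->].
    rewrite bag_mu_of_map. intro E. symmetry in E.
    apply bag_map_eq_of_inv in E as [l [-> E]]. symmetry in E.
    apply concat_eq_map_inv in E as [lss [-> E]].
    exists (bag_of (map bag_of lss)).
    rewrite bag_map_bag_of_map, bag_mu_of_map, E. split; reflexivity.
Qed.

Lemma bag_weakly_cartesian : weakly_cartesian bag_monad.
Proof.
  split; [exact bag_preserves_weak_pullbacks|].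
  split; intros X Y h; [apply bag_eta_weak_pullback | apply bag_mu_weak_pullback].
Qed.

Lemma incl_lift {X} (l0 l : list X) :
  incl l l0 -> exists l' : list {z : X | In z l0}, map (@proj1_sig X _) l' = l.
Proof.
  induction l as [|a l IH]; intro Hincl.
  - exists []. reflexivity.
  - destruct IH as [l' E]; [intros z Hz; apply Hincl; right; exact Hz|].
    exists (exist _ a (Hincl a (or_introl eq_refl)) :: l'). cbn. rewrite E. reflexivity.
Qed.

Lemma bag_finitary : finitary bag_monad.
Proof.
  intros X b. destruct (bag_of_surj b) as [l ->].
  destruct (incl_lift l l (incl_refl l)) as [l' E].
  exists l, (bag_of l'). rewrite fmap_bag_monad, bag_map_of, E. reflexivity.
Qed.

Definition bag_mem {X} (a : X) (b : bag X) : Prop := In a (list_of b).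

Lemma bag_mem_of {X} (a : X) (l : list X) : bag_mem a (bag_of l) <-> In a l.
Proof.
  unfold bag_mem. split; apply Permutation_in; [|symmetry]; apply list_of_bag_of.
Qed.

Lemma bag_mem_map {X Y} (f : X -> Y) (a : X) (b : bag X) :
  bag_mem a b -> bag_mem (f a) (bag_map f b).
Proof.
  destruct (bag_of_surj b) as [l ->]. rewrite bag_map_of, !bag_mem_of. apply in_map.
Qed.

Lemma bag_mem_map_inv {X Y} (f : X -> Y) (y : Y) (b : bag X) :
  bag_mem y (bag_map f b) -> exists a, bag_mem a b /\ f a = y.
Proof.
  destruct (bag_of_surj b) as [l ->]. rewrite bag_map_of, bag_mem_of.
  intros [a [E H]]%in_map_iff. exists a. rewrite bag_mem_of. auto.
Qed.

Lemma bag_mem_mu {X} (a : X) (b : bag X) (B : bag (bag X)) :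
  bag_mem a b -> bag_mem b B -> bag_mem a (bag_mu B).
Proof.
  destruct (bag_of_surj B) as [L ->]. rewrite bag_mu_of, !bag_mem_of.
  intros Ha Hb. apply in_flat_map. exists b. auto.
Qed.

Definition to_unit (b : bag unit) : unit := tt.

Lemma unit_is_algebra : is_algebra bag_monad unit to_unit.
Proof. split; [intros []|]; reflexivity. Qed.

Definition num (k : nat) : bag unit := bag_of (repeat tt k).

Lemma num_inj (m n : nat) : num m = num n -> m = n.
Proof. intro E. apply bag_of_length in E. rewrite !repeat_length in E. exact E. Qed.

Ltac bag_compute :=
  unfold num, to_unit; cbn [repeat];
  repeat progress (rewrite ?bag_map_of, ?bag_mu_cons, ?bag_mu_nil, ?bag_union_of;
                   cbn [map app]).

Definition horn31 (i : nat) : X2 bag_monad unit :=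
  match i with
  | 0 => bag_of [bag_of [num 2]; bag_of [num 1; num 1]]
  | 2 => bag_of [bag_of [num 1; num 1]; bag_of [num 2; num 2]]
  | _ => bag_of [bag_of [num 1; num 2]; bag_of [num 1]; bag_of [num 2]]
  end.

Definition horn32 (i : nat) : X2 bag_monad unit :=
  match i with
  | 0 => bag_of [bag_of [num 1; num 1]; bag_of [num 2; num 2]]
  | 1 => bag_of [bag_of [num 1; num 3]; bag_of [num 2; num 4]]
  | _ => bag_of [bag_of [num 1]; bag_of [num 2]; bag_of [num 1; num 2]; bag_of [num 1; num 3]]
  end.

Lemma horn31_is_horn : is_horn3 bag_monad unit to_unit 1 horn31.
Proof.
  intros i j Hij Hj Hi Hj1.
  destruct i as [|[|[|[|i]]]]; try lia; destruct j as [|[|[|[|j]]]]; try lia;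
    cbn; bag_compute; try reflexivity.
  apply bag_of_eq, perm_skip, perm_swap.
Qed.

Lemma horn32_is_horn : is_horn3 bag_monad unit to_unit 2 horn32.
Proof.
  intros i j Hij Hj Hi Hj1.
  destruct i as [|[|[|[|i]]]]; try lia; destruct j as [|[|[|[|j]]]]; try lia;
    cbn; bag_compute; try reflexivity.
  apply bag_of_eq, perm_skip, perm_swap.
Qed.

Lemma horn31_no_filler : ~ has_filler3 bag_monad unit to_unit 1 horn31.
Proof.
  intros [y Hy].
  assert (H0 := Hy 0 ltac:(lia) ltac:(lia)).
  assert (H2 := Hy 2 ltac:(lia) ltac:(lia)).
  assert (H3 := Hy 3 ltac:(lia) ltac:(lia)).
  assert (Hm : bag_mem (bag_of [num 2]) (d3 bag_monad unit to_unit 0 y))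
    by (rewrite H0; apply bag_mem_of; left; reflexivity).
  apply bag_mem_map_inv in Hm as [P [HP EP]].
  apply bag_map_eq_single_inv in EP as [b [-> Eb]].
  apply bag_map_eq_pair_inv in Eb as [c1 [c2 [-> _]]].
  assert (Hm2 : bag_mem (bag_of [c1; c2]) (horn31 2)).
  { rewrite <- H2, <- (bag_mu_eta (bag_of [c1; c2])). apply bag_mem_map, HP. }
  assert (Hm3 : bag_mem (bag_of [c1; c2]) (horn31 3)).
  { rewrite <- H3. eapply bag_mem_mu; [|exact HP]. apply bag_mem_of. left. reflexivity. }
  cbn [horn31] in Hm2, Hm3. rewrite bag_mem_of in Hm2, Hm3.
  destruct Hm2 as [E | [E | []]]; symmetry in E; apply bag_of_pair_diag in E as [-> ->];
    destruct Hm3 as [E | [E | [E | []]]]; try (apply bag_of_length in E; discriminate);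
    apply bag_of_pair_diag in E as [E1%num_inj E2%num_inj]; congruence.
Qed.

Lemma horn32_no_filler : ~ has_filler3 bag_monad unit to_unit 2 horn32.
Proof.
  intros [y Hy].
  assert (H0 := Hy 0 ltac:(lia) ltac:(lia)).
  assert (H1 := Hy 1 ltac:(lia) ltac:(lia)).
  assert (H3 := Hy 3 ltac:(lia) ltac:(lia)).
  assert (Hm : bag_mem (bag_of [num 1; num 1]) (d3 bag_monad unit to_unit 0 y))
    by (rewrite H0; apply bag_mem_of; left; reflexivity).
  apply bag_mem_map_inv in Hm as [P [HP EP]].
  apply bag_map_eq_pair_inv in EP as [b1 [b2 [-> [Eb1 Eb2]]]].
  apply bag_map_eq_single_inv in Eb1 as [c1 [-> _]].
  apply bag_map_eq_single_inv in Eb2 as [c2 [-> _]].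
  assert (Hsmall : forall c, In c [c1; c2] -> c = num 1 \/ c = num 2).
  { intros c Hc.
    assert (Hm3 : bag_mem (bag_of [c]) (horn32 3)).
    { rewrite <- H3. eapply bag_mem_mu; [|exact HP]. apply bag_mem_of.
      destruct Hc as [<- | [<- | []]]; [left | right; left]; reflexivity. }
    cbn [horn32] in Hm3. rewrite bag_mem_of in Hm3.
    destruct Hm3 as [E | [E | [E | [E | []]]]];
      try (apply bag_of_length in E; discriminate);
      apply bag_of_single_inj in E; auto. }
  assert (Hbig : exists c, In c [c1; c2] /\ (c = num 3 \/ c = num 4)).
  { assert (Hm1 : bag_mem (bag_of [c1; c2]) (horn32 1)).
    { assert (Emu : bag_map bag_mu (bag_of [bag_eta c1; bag_eta c2]) = bag_of [c1; c2])
        by (rewrite bag_map_of; cbn [map]; rewrite !bag_mu_eta; reflexivity).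
      rewrite <- H1, <- Emu. apply bag_mem_map, HP. }
    cbn [horn32] in Hm1. rewrite bag_mem_of in Hm1.
    destruct Hm1 as [E | [E | []]]; [exists (num 3) | exists (num 4)];
      (split; [|auto]); eapply Permutation_in; try apply bag_of_eq, E;
      right; left; reflexivity. }
  destruct Hbig as [c [Hc [-> | ->]]];
    destruct (Hsmall _ Hc) as [E | E]; apply num_inj in E; discriminate.
Qed.

Theorem theorem4p7 :
  exists (M : Monad) (A : Type) (e : T M A -> A),
    finitary M /\ weakly_cartesian M /\ is_algebra M A e /\
    (exists x : nat -> X2 M A,
        is_horn3 M A e 1 x /\ ~ has_filler3 M A e 1 x) /\
    (exists x : nat -> X2 M A,
        is_horn3 M A e 2 x /\ ~ has_filler3 M A e 2 x).
Proof.
  exists bag_monad, unit, to_unit.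
  split; [exact bag_finitary|].
  split; [exact bag_weakly_cartesian|].
  split; [exact unit_is_algebra|].
  split.
  - exists horn31. split; [exact horn31_is_horn | exact horn31_no_filler].
  - exists horn32. split; [exact horn32_is_horn | exact horn32_no_filler].
Qed.
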